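(* Let $\varphi:VB_n\to\mathrm{Aut}(F_n)$ be the homomorphism with $\varphi(\sigma_i)=\sigma_i$ and $\varphi(\rho_i)=\alpha_i$ (as automorphisms below), $i=1,\dots,n-1$. Then $\varphi(VP_n)=Cb_n$ and $\varphi(V_i^* )=D_i$ for $i=1,\dots,n-1$.
   Context: The virtual braid group $VB_n$ has generators $\sigma_1,\dots,\sigma_{n-1},\rho_1,\dots,\rho_{n-1}$ and defining relations: $\sigma_i\sigma_{i+1}\sigma_i=\sigma_{i+1}\sigma_i\sigma_{i+1}$, $\sigma_i\sigma_j=\sigma_j\sigma_i$ ($|i-j|\ge2$); $\rho_i\rho_{i+1}\rho_i=\rho_{i+1}\rho_i\rho_{i+1}$, $\rho_i\rho_j=\rho_j\rho_i$ ($|i-j|\ge2$), $\rho_i^2=1$; $\sigma_i\rho_j=\rho_j\sigma_i$ ($|i-j|\ge2$), $\rho_i\rho_{i+1}\sigma_i=\sigma_{i+1}\rho_i\rho_{i+1}$. $VP_n$ is the kernel of $VB_n\to S_n$, $\sigma_i,\rho_i\mapsto(i,i+1)$. Set $\lambda_{i,i+1}=\rho_i\sigma_i^{-1}$, $\lambda_{i+1,i}=\sigma_i^{-1}\rho_i$, and for $1\le i<j-1\le n-1$: $\lambda_{ij}=\rho_{j-1}\cdots\rho_{i+1}\lambda_{i,i+1}\rho_{i+1}\cdots\rho_{j-1}$, $\lambda_{ji}=\rho_{j-1}\cdots\rho_{i+1}\lambda_{i+1,i}\rho_{i+1}\cdots\rho_{j-1}$. $V_i$ is the subgroup generated by $\lambda_{1,i+1},\dots,\lambda_{i,i+1},\lambda_{i+1,1},\dots,\lambda_{i+1,i}$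 and $V_i^*$ its normal closure in $\langle\lambda_{kl}:k,l\le i+1\rangle$. Let $F_n=\langle x_1,\dots,x_n\rangle$ be free. The automorphism $\sigma_i$ sends $x_i\mapsto x_ix_{i+1}x_i^{-1}$, $x_{i+1}\mapsto x_i$, fixing other $x_l$; $\alpha_i$ swaps $x_i,x_{i+1}$ and fixes the others; $\varepsilon_{ij}$ ($i\ne j$) sends $x_i\mapsto x_j^{-1}x_ix_j$ and fixes $x_l$, $l\ne i$. (These assignments define a homomorphism $\varphi$; its image is the welded braid group $WB_n$, the group of conjugating automorphisms.) $Cb_n=\langle\varepsilon_{ij}:1\le i\ne j\le n\rangle$ and $D_i=\langle\varepsilon_{i+1,1},\dots,\varepsilon_{i+1,i},\varepsilon_{1,i+1},\dots,\varepsilon_{i,i+1}\rangle$. *)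

(* Concrete combinatorial model:
   - elements of F_n are words over letters (k, b) = x_k^{+1} (b = true) / x_k^{-1};
   - an endomorphism of F_n is given by images of generators and acts on words
     by substitution followed by free reduction;
   - elements of VB_n are represented by words in the generators
     sigma_i^{+-1}, rho_i; phi is evaluated on such words. *)
From mathcomp Require Import all_boot.
Set Implicit Arguments. Unset Strict Implicit. Unset Printing Implicit Defensive.

Definition letter := (nat * bool)%type.
Definition fword := seq letter.
Definition linv (a : letter) : letter := (a.1, ~~ a.2).
Definition winv (w : fword) : fword := rev (map linv w).
Definition red_cons (a : letter) (s : fword) : fword :=
  if s is b :: s' then (if (a.1 == b.1) && (a.2 != b.2) then s' else a :: s)
  else [:: a].
Definition reduce (w : fword) : fword := foldr red_cons [::] w.
Definition subst (img : nat -> fword) (w : fword) : fword :=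
  reduce (flatten (map (fun a => if a.2 then img a.1 else winv (img a.1)) w)).

Definition aut := fword -> fword.
Definition xp (k : nat) : letter := (k, true).
Definition xm (k : nat) : letter := (k, false).
Definition inFn (n : nat) (w : fword) : bool := all (fun a => 0 < a.1 <= n) w.
Definition aut_eq (n : nat) (f g : aut) : Prop :=
  forall w, inFn n w -> f w = g w.

Definition img_sigma (i k : nat) : fword :=
  if k == i then [:: xp i; xp i.+1; xm i]
  else if k == i.+1 then [:: xp i] else [:: xp k].
Definition img_sigma_inv (i k : nat) : fword :=
  if k == i then [:: xp i.+1]
  else if k == i.+1 then [:: xm i.+1; xp i; xp i.+1] else [:: xp k].
Definition img_alpha (i k : nat) : fword :=
  if k == i then [:: xp i.+1] else if k == i.+1 then [:: xp i] else [:: xp k].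
Definition img_eps (i j k : nat) : fword :=
  if k == i then [:: xm j; xp i; xp j] else [:: xp k].
Definition img_eps_inv (i j k : nat) : fword :=
  if k == i then [:: xp j; xp i; xm j] else [:: xp k].

(* Sig i true = sigma_i, Sig i false = sigma_i^{-1}, Rho i = rho_i *)
Inductive vbgen := Sig of nat & bool | Rho of nat.
Definition vb_idx (g : vbgen) : nat := match g with Sig i _ => i | Rho i => i end.
Definition vb_valid (n : nat) (w : seq vbgen) : bool :=
  all (fun g => 0 < vb_idx g < n) w.
Definition vb_ginv (g : vbgen) : vbgen :=
  match g with Sig i b => Sig i (~~ b) | Rho i => Rho i end.
Definition vb_inv (w : seq vbgen) : seq vbgen := rev (map vb_ginv w).

Definition vb_act (g : vbgen) : aut :=
  match g with
  | Sig i true => subst (img_sigma i)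
  | Sig i false => subst (img_sigma_inv i)
  | Rho i => subst (img_alpha i)
  end.
Definition phiw (w : seq vbgen) : aut :=
  foldr (fun g f => fun u => vb_act g (f u)) id w.

(* the map VB_n -> S_n : sigma_i, rho_i |-> (i, i+1) *)
Definition swapn (i k : nat) : nat :=
  if k == i then i.+1 else if k == i.+1 then i else k.
Definition permw (w : seq vbgen) : nat -> nat :=
  foldr (fun g p => fun k => swapn (vb_idx g) (p k)) id w.
Definition VPword (n : nat) (w : seq vbgen) : Prop :=
  vb_valid n w /\ forall k, permw w k = k.

Inductive gen (S : seq vbgen -> Prop) : seq vbgen -> Prop :=
| gen_nil : gen S [::]
| gen_in w : S w -> gen S w
| gen_cat u v : gen S u -> gen S v -> gen S (u ++ v)
| gen_inv u : gen S u -> gen S (vb_inv u).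

Definition lamw (a b : nat) : seq vbgen :=
  if a < b then
    map Rho (rev (iota a.+1 (b - a - 1))) ++ [:: Rho a; Sig a false]
      ++ map Rho (iota a.+1 (b - a - 1))
  else if b < a then
    map Rho (rev (iota b.+1 (a - b - 1))) ++ [:: Sig b false; Rho b]
      ++ map Rho (iota b.+1 (a - b - 1))
  else [::].

Definition Lam_set (i : nat) (w : seq vbgen) : Prop :=
  exists k l, [/\ 0 < k <= i.+1, 0 < l <= i.+1, k != l & w = lamw k l].
Definition V_set (i : nat) (w : seq vbgen) : Prop :=
  exists k, 0 < k <= i /\ (w = lamw k i.+1 \/ w = lamw i.+1 k).
(* V_i^* : normal closure of V_i in <lambda_kl : k,l <= i+1>,
   i.e. the subgroup generated by g h g^{-1}, g in <Lam_set i>, h in V_i *)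
Definition Vstar (i : nat) : seq vbgen -> Prop :=
  gen (fun w => exists g h, [/\ gen (Lam_set i) g, gen (V_set i) h &
                                 w = g ++ h ++ vb_inv g]).

Definition phi_img (n : nat) (S : seq vbgen -> Prop) (f : aut) : Prop :=
  exists w, S w /\ aut_eq n f (phiw w).

(* ((i, j), true) = epsilon_ij, ((i, j), false) = epsilon_ij^{-1} *)
Definition epsw (u : seq (nat * nat * bool)) : aut :=
  foldr (fun e f => fun v =>
           subst (if e.2 then img_eps e.1.1 e.1.2 else img_eps_inv e.1.1 e.1.2)
                 (f v)) id u.
Definition Cb_set (n : nat) (f : aut) : Prop :=
  exists u, all (fun e : nat * nat * bool =>
                   [&& 0 < e.1.1 <= n, 0 < e.1.2 <= n & e.1.1 != e.1.2]) u
            /\ aut_eq n f (epsw u).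
Definition D_set (n i : nat) (f : aut) : Prop :=
  exists u, all (fun e : nat * nat * bool =>
                   ((e.1.1 == i.+1) && (0 < e.1.2 <= i))
                   || ((e.1.2 == i.+1) && (0 < e.1.1 <= i))) u
            /\ aut_eq n f (epsw u).

From mathcomp Require Import all_boot zify.
From Stdlib Require Import Setoid Morphisms.
Set Implicit Arguments. Unset Strict Implicit. Unset Printing Implicit Defensive.

(* Under [phi], [rho_i] acts as the permutation automorphism [alpha_i], while [sigma_i] and
   [sigma_i^-1] act as [eps_(i+1,i)^-1 alpha_i] and [eps_(i,i+1) alpha_i]. Moving the
   permutation parts to the right only relabels the indices of the [eps]'s, so [phi w] is a
   product of [eps]'s followed by the permutation automorphism of the image of [w] in [S_n],
   which is trivial on [VP_n]. Conversely [phi (lambda_kl) = eps_lk], and the [lambda_kl] are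
   pure, so [phi (VP_n) = Cb_n]. The generators of [V_i] go exactly to those of [D_i], and the
   conjugation relations between the [eps]'s show that [D_i] is normalised by every [eps_kl]
   with [k, l <= i + 1], the images of the [lambda_kl]; hence [phi (V_i^* ) = D_i]. *)

(** * Free reduction and substitution *)

Definition reduced (s : fword) : bool := sorted (fun a b => b != linv a) s.

Lemma linvK : involutive linv.
Proof. by case=> x b; rewrite /linv /= negbK. Qed.

Lemma red_consE a s : red_cons a s =
  if s is b :: s' then if b == linv a then s' else a :: s else [:: a].
Proof.
case: s => [|b s] //=; case: a b => [x u] [y v] /=.
by rewrite /linv /= xpair_eqE eq_sym; case: u; case: v.
Qed.

Lemma reduced_cons a s :
  reduced (a :: s) = (if s is b :: _ then b != linv a else true) && reduced s.
Proof. by case: s. Qed.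

Lemma reduced_red_cons a s : reduced s -> reduced (red_cons a s).
Proof.
rewrite red_consE; case: s => [|b s] //.
case: ifP => [_|hb]; first by rewrite reduced_cons => /andP[].
by move=> H; rewrite reduced_cons hb H.
Qed.

Lemma reduced_foldr u s : reduced s -> reduced (foldr red_cons s u).
Proof. by elim: u => //= a u IH /IH; apply: reduced_red_cons. Qed.

Lemma reduced_reduce w : reduced (reduce w).
Proof. exact: reduced_foldr. Qed.

Lemma reduce_reduced s : reduced s -> reduce s = s.
Proof.
elim: s => // a s IH; rewrite reduced_cons => /andP[hb /IH hs].
by rewrite /= -/(reduce s) hs red_consE; case: s hb {IH hs} => // b s /negbTE->.
Qed.

Lemma reduce_idem w : reduce (reduce w) = reduce w.
Proof. exact: reduce_reduced (reduced_reduce w). Qed.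

Lemma red_consK a t : reduced t -> red_cons a (red_cons (linv a) t) = t.
Proof.
case: t => [|b t]; first by rewrite !red_consE eqxx.
rewrite reduced_cons => /andP[hb _]; rewrite [red_cons (linv a) _]red_consE linvK.
case: eqP => [<-|_]; last by rewrite red_consE eqxx.
by rewrite red_consE; case: t hb => // c t /negbTE->.
Qed.

Lemma foldr_red_cons_reduce u s :
  reduced s -> foldr red_cons s u = foldr red_cons s (reduce u).
Proof.
move=> Hs; elim: u => //= a u ->; rewrite -/(reduce u).
have : reduced (reduce u) by apply: reduced_reduce.
case: (reduce u) => [|b r] // _; rewrite [red_cons a (b :: r)]red_consE.
by case: eqP => [->|//]; rewrite /= red_consK //; apply: reduced_foldr.
Qed.

Lemma reduce_cat u v : reduce (u ++ v) = reduce (reduce u ++ reduce v).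
Proof.
rewrite /reduce !foldr_cat -/(reduce v) -/(reduce (reduce v)) reduce_idem.
exact/foldr_red_cons_reduce/reduced_reduce.
Qed.

Lemma reduce_catl u v : reduce (reduce u ++ v) = reduce (u ++ v).
Proof. by rewrite reduce_cat reduce_idem -reduce_cat. Qed.

Lemma reduce_catr u v : reduce (u ++ reduce v) = reduce (u ++ v).
Proof. by rewrite reduce_cat reduce_idem -reduce_cat. Qed.

Lemma winvK : involutive winv.
Proof.
by move=> w; rewrite /winv map_rev revK -map_comp map_id_in // => a _ /=; rewrite linvK.
Qed.

Lemma winv_cat u v : winv (u ++ v) = winv v ++ winv u.
Proof. by rewrite /winv map_cat rev_cat. Qed.

Lemma reduce_cat_winv w : reduce (w ++ winv w) = [::].
Proof.
elim: w => // a w IH.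
rewrite -cat1s winv_cat /= -/(reduce _) catA reduce_cat IH /=.
by rewrite eqxx; case: (a.2).
Qed.

Lemma reduce_winv_cat w : reduce (winv w ++ w) = [::].
Proof. by rewrite -{2}(winvK w) reduce_cat_winv. Qed.

Lemma reduced_winv s : reduced s -> reduced (winv s).
Proof.
rewrite /reduced /winv rev_sorted sorted_map; apply: sub_sorted.
by case=> [x u] [y v]; rewrite /linv /= !xpair_eqE eq_sym; case: u; case: v.
Qed.

Lemma reduce_winv w : reduce (winv w) = winv (reduce w).
Proof.
rewrite -(cats0 (winv w)) -(reduce_cat_winv (reduce w)) reduce_catr catA.
rewrite -reduce_catl reduce_catr reduce_winv_cat /=.
exact/reduce_reduced/reduced_winv/reduced_reduce.
Qed.

Definition limg (I : nat -> fword) (a : letter) : fword :=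
  if a.2 then I a.1 else winv (I a.1).

Lemma substE I w : subst I w = reduce (flatten (map (limg I) w)).
Proof. by []. Qed.

Lemma reduce_subst I w : reduce (subst I w) = subst I w.
Proof. exact: reduce_idem. Qed.

Lemma subst_cat I u v : subst I (u ++ v) = reduce (subst I u ++ subst I v).
Proof. by rewrite !substE map_cat flatten_cat reduce_cat. Qed.

Lemma subst_cons I a w : subst I (a :: w) = reduce (limg I a ++ subst I w).
Proof. by rewrite substE /= reduce_catr. Qed.

Lemma limg_linv I a : limg I (linv a) = winv (limg I a).
Proof. by rewrite /limg /=; case: (a.2); rewrite ?winvK. Qed.

Lemma subst_reduce I w : subst I (reduce w) = subst I w.
Proof.
elim: w => // a w IH; rewrite /= -/(reduce w) subst_cons -IH red_consE.
case: (reduce w) => [|b r]; first by rewrite subst_cons.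
case: eqP => [->|_]; last by rewrite subst_cons.
rewrite subst_cons limg_linv reduce_catr catA -reduce_catl reduce_cat_winv /=.
by rewrite reduce_subst.
Qed.

Lemma subst_winv I w : subst I (winv w) = winv (subst I w).
Proof.
have winv_flatten (l : seq fword) : winv (flatten l) = flatten (rev (map winv l)).
  by elim: l => //= x l IH; rewrite winv_cat IH rev_cons flatten_rcons.
rewrite !substE -reduce_winv winv_flatten /winv map_rev -!map_comp.
by congr (reduce (flatten (rev _))); apply: eq_map => a /=; rewrite limg_linv.
Qed.

Lemma subst_comp I J w : subst I (subst J w) = subst (fun k => subst I (J k)) w.
Proof.
elim: w => // a w IH; rewrite subst_cons subst_reduce subst_cat IH [RHS]subst_cons.
by rewrite /limg; case: (a.2); rewrite ?subst_winv.
Qed.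

Lemma subst_id w : subst (fun k => [:: xp k]) w = reduce w.
Proof. by rewrite substE; congr reduce; elim: w => // [[x []]] w /= ->. Qed.

(** * Endomorphisms of the free group *)

Definition img := nat -> fword.
Definition id_img : img := fun k => [:: xp k].
Definition icomp (I J : img) : img := fun k => subst I (J k).
Definition img_eq (I J : img) := forall k, reduce (I k) = reduce (J k).
Infix "=~" := img_eq (at level 70).

#[export] Instance img_eq_Equivalence : Equivalence img_eq.
Proof. by split=> [I k|I J H k|I J K H1 H2 k]; rewrite ?H ?H1. Qed.

Lemma subst_img_eq I J w : I =~ J -> subst I w = subst J w.
Proof.
move=> H; elim: w => // a w IH; rewrite !subst_cons IH -reduce_catl.
by rewrite -[RHS]reduce_catl /limg; case: (a.2); rewrite ?reduce_winv H.
Qed.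

#[export] Instance icomp_Proper : Proper (img_eq ==> img_eq ==> img_eq) icomp.
Proof.
move=> I I' HI J J' HJ k; rewrite /icomp !reduce_subst.
by rewrite -subst_reduce HJ subst_reduce (subst_img_eq _ HI).
Qed.

Lemma icompA I J K : icomp (icomp I J) K =~ icomp I (icomp J K).
Proof. by move=> k; rewrite /icomp subst_comp. Qed.

Lemma icomp1I I : icomp id_img I =~ I.
Proof. by move=> k; rewrite /icomp subst_id reduce_idem. Qed.

Lemma icompI1 I : icomp I id_img =~ I.
Proof. by move=> k; rewrite /icomp subst_cons /limg /= cats0 reduce_idem. Qed.

Definition icomp_list (Is : seq img) : img := foldr icomp id_img Is.
Definition subst_list (Is : seq img) : aut :=
  foldr (fun I f v => subst I (f v)) id Is.

Lemma icomp_list_cat A B : icomp_list (A ++ B) =~ icomp (icomp_list A) (icomp_list B).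
Proof. by elim: A => [|I A IH] /=; rewrite ?icomp1I // IH icompA. Qed.

Lemma subst_subst_list I Is v :
  subst I (subst_list Is v) = subst (icomp I (icomp_list Is)) v.
Proof.
elim: Is I => [|J Is IH] I /=; first by apply: subst_img_eq; rewrite icompI1.
by rewrite subst_comp -/(icomp I J) IH; apply: subst_img_eq; rewrite icompA.
Qed.

Lemma subst_list_cons I Is v : subst_list (I :: Is) v = subst (icomp_list (I :: Is)) v.
Proof. exact: subst_subst_list. Qed.

Definition gimg (g : vbgen) : img :=
  match g with
  | Sig i true => img_sigma i
  | Sig i false => img_sigma_inv i
  | Rho i => img_alpha i
  end.
Definition eimg (e : nat * nat * bool) : img :=
  if e.2 then img_eps e.1.1 e.1.2 else img_eps_inv e.1.1 e.1.2.
Definition imgw (w : seq vbgen) : img := icomp_list (map gimg w).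
Definition imge (u : seq (nat * nat * bool)) : img := icomp_list (map eimg u).

(* [phiw [::]] is the identity, whereas every nonempty word acts through [subst] and so
   reduces its argument; hence the side condition on empty words. *)
Lemma phiw_epsw (w : seq vbgen) (u : seq (nat * nat * bool)) :
  nilp w = nilp u -> imgw w =~ imge u -> phiw w =1 epsw u.
Proof.
have phiwE w' v : phiw w' v = subst_list (map gimg w') v.
  by elim: w' => //= [[i [] | i]] w' ->.
have epswE u' v : epsw u' v = subst_list (map eimg u') v.
  by elim: u' => //= [[[i j] []]] u' ->.
move=> hnil H v; rewrite phiwE epswE {phiwE epswE}.
case: w hnil H => [|g w]; case: u => [|e u] // _ H.
by rewrite !subst_list_cons; apply: subst_img_eq.
Qed.

Lemma imgw_cat u v : imgw (u ++ v) =~ icomp (imgw u) (imgw v).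
Proof. by rewrite /imgw map_cat icomp_list_cat. Qed.

Lemma imge_cat u v : imge (u ++ v) =~ icomp (imge u) (imge v).
Proof. by rewrite /imge map_cat icomp_list_cat. Qed.

Lemma imgw1 g : imgw [:: g] =~ gimg g.
Proof. exact: icompI1. Qed.

Lemma imge1 e : imge [:: e] =~ eimg e.
Proof. exact: icompI1. Qed.

Lemma imge_congr u v x y : imge x =~ imge y -> imge (u ++ x ++ v) =~ imge (u ++ y ++ v).
Proof. by move=> H; rewrite !imge_cat H. Qed.

(** * Relations between the generators *)

Ltac case_idx2 k a b := case: (eqVneq k a) => [->|?]; [|case: (eqVneq k b) => [->|?]].
Ltac case_idx3 k a b c := case: (eqVneq k a) => [->|?]; [|case_idx2 k b c].

(* Evaluate both sides at [x_k]; the case split on [k] decides every index comparison. *)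
Ltac eval_img :=
  rewrite /icomp /eimg /imge /icomp_list /= /icomp /eimg /img_eps /img_eps_inv
    /img_alpha /img_sigma /img_sigma_inv /subst /limg /=;
  repeat (progress (rewrite /= ?eqxx ?andbT ?andbF;
    repeat match goal with
    | H : is_true (?x != ?y) |- context [?x == ?y] => rewrite (negbTE H)
    | H : is_true (?x != ?y) |- context [?y == ?x] => rewrite [y == x]eq_sym (negbTE H)
    end));
  try done.

(* Replaces [i.+1] by a fresh [j <> i], so that [eval_img] needs no arithmetic. *)
Ltac generalize_succ i j :=
  have := negbT (ltn_eqF (ltnSn i)); move: (i.+1) => j ij;
  have ji : j != i by rewrite eq_sym.

Lemma sigma_factor i : img_sigma i =~ icomp (img_eps_inv i.+1 i) (img_alpha i).
Proof.
rewrite /img_sigma /img_alpha; generalize_succ i j.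
by move=> k; case_idx2 k i j; eval_img.
Qed.

Lemma sigma_inv_factor i : img_sigma_inv i =~ icomp (img_eps i i.+1) (img_alpha i).
Proof.
rewrite /img_sigma_inv /img_alpha; generalize_succ i j.
by move=> k; case_idx2 k i j; eval_img.
Qed.

Lemma gimg_inv g : icomp (gimg (vb_ginv g)) (gimg g) =~ id_img.
Proof.
case: g => [i [] | i] /=; rewrite /img_sigma_inv /img_sigma /img_alpha; generalize_succ i j.
all: by move=> k; case_idx2 k i j; eval_img.
Qed.

Lemma imgw_rho_sigma_inv a : imgw [:: Rho a; Sig a false] =~ eimg ((a.+1, a), true).
Proof.
rewrite /imgw /icomp_list /= /eimg /img_sigma_inv /img_alpha /=; generalize_succ a j.
by move=> k; case_idx2 k a j; eval_img.
Qed.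

Lemma imgw_sigma_inv_rho a : imgw [:: Sig a false; Rho a] =~ eimg ((a, a.+1), true).
Proof.
rewrite /imgw /icomp_list /= /eimg /img_sigma_inv /img_alpha /=; generalize_succ a j.
by move=> k; case_idx2 k a j; eval_img.
Qed.

Definition flipe (e : nat * nat * bool) : nat * nat * bool := (e.1, ~~ e.2).

Lemma flipeK : involutive flipe.
Proof. by case=> [[a b] t]; rewrite /flipe /= negbK. Qed.

Lemma eimg_flipK e : e.1.1 != e.1.2 -> icomp (eimg e) (eimg (flipe e)) =~ id_img.
Proof.
case: e => [[a b] t] /= ab; have ba : b != a by rewrite eq_sym.
by case: t => k; case_idx2 k a b; eval_img.
Qed.

Lemma imge_cancel u v e :
  e.1.1 != e.1.2 -> imge (u ++ [:: e; flipe e] ++ v) =~ imge (u ++ v).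
Proof.
move=> he; rewrite (imge_congr u v (y := [::])) //.
by rewrite /imge /= icompI1 eimg_flipK.
Qed.

Lemma eps_commute a b c d t s : a != b -> c != d -> a != c -> a != d -> c != b ->
  imge [:: ((a, b), t); ((c, d), s)] =~ imge [:: ((c, d), s); ((a, b), t)].
Proof.
move=> ab cd ac ad cb k.
by case: t; case: s; case_idx2 k a c; eval_img.
Qed.

Lemma conj_eps_cp p q c t s : p != q -> p != c -> q != c ->
  imge [:: ((p, q), t); ((c, p), s); ((p, q), ~~ t)] =~
  imge [:: ((c, q), ~~ t); ((c, p), s); ((c, q), t)].
Proof. by move=> pq pc qc; case: t; case: s => k; case_idx3 k p q c; eval_img. Qed.

Lemma conj_eps_pc p q c t s : p != q -> p != c -> q != c ->
  imge [:: ((p, q), t); ((p, c), s); ((p, q), ~~ t)] =~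
  imge [:: ((c, q), ~~ t); ((p, c), s); ((c, q), t)].
Proof. by move=> pq pc qc; case: t; case: s => k; case_idx3 k p q c; eval_img. Qed.

Lemma eps_pc_qc_commute p q c t s : p != q -> p != c -> q != c ->
  imge [:: ((p, c), s); ((q, c), s); ((p, q), t)] =~
  imge [:: ((p, q), t); ((p, c), s); ((q, c), s)].
Proof. by move=> pq pc qc; case: t; case: s => k; case_idx3 k p q c; eval_img. Qed.

Lemma conj_eps_qc p q c t s : p != q -> p != c -> q != c ->
  imge [:: ((p, q), t); ((q, c), s); ((p, q), ~~ t)] =~
  imge [:: ((c, q), ~~ t); ((p, c), ~~ s); ((c, q), t); ((p, c), s); ((q, c), s)].
Proof.
move=> pq pc qc.
rewrite -(imge_cancel [:: ((p, q), t)] [:: ((q, c), s); ((p, q), ~~ t)]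
            (e := ((p, c), ~~ s))) // /flipe /= negbK.
rewrite -[[:: _; _; _; _; _]]/([:: ((p, q), t); ((p, c), ~~ s)] ++
           [:: ((p, c), s); ((q, c), s); ((p, q), ~~ t)] ++ [::]).
rewrite imge_congr; last exact: eps_pc_qc_commute.
rewrite -[_ ++ _]/([::] ++ [:: ((p, q), t); ((p, c), ~~ s); ((p, q), ~~ t)] ++
                  [:: ((p, c), s); ((q, c), s)]).
by rewrite imge_congr; last exact: conj_eps_pc.
Qed.

Definition pimg (p : nat -> nat) : img := fun k => [:: xp (p k)].

Definition relabel (p : nat -> nat) (e : nat * nat * bool) : nat * nat * bool :=
  ((p e.1.1, p e.1.2), e.2).

Lemma alpha_pimg i : img_alpha i =~ pimg (swapn i).
Proof. by move=> k; rewrite /img_alpha /pimg /swapn; case: ifP => _ //; case: ifP. Qed.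

Lemma pimg_comp p q : icomp (pimg p) (pimg q) =~ pimg (p \o q).
Proof. by []. Qed.

Lemma pimg_id p : p =1 id -> pimg p =~ id_img.
Proof. by move=> H k; rewrite /pimg H. Qed.

Lemma pimg_eimg p (pinj : injective p) e :
  icomp (pimg p) (eimg e) =~ icomp (eimg (relabel p e)) (pimg p).
Proof.
case: e => [[a b] t] k; rewrite /eimg /=.
case: (eqVneq k a) => [->|ne].
  by case: t; rewrite /icomp /pimg /img_eps /img_eps_inv /subst /limg /= ?eqxx.
have ne' : p k != p a by rewrite (inj_eq pinj).
by case: t; rewrite /icomp /pimg /img_eps /img_eps_inv (negbTE ne) /subst /limg /=
  (negbTE ne').
Qed.

Lemma pimg_imge p (pinj : injective p) u :
  icomp (pimg p) (imge u) =~ icomp (imge (map (relabel p) u)) (pimg p).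
Proof.
elim: u => [|e u IH]; first by rewrite /= icompI1 icomp1I.
by rewrite /imge /= -icompA pimg_eimg // icompA IH -icompA.
Qed.

Lemma swapnK i : involutive (swapn i).
Proof.
move=> k; rewrite /swapn; case: (eqVneq k i) => [->|ki]; first by rewrite gtn_eqF ?eqxx.
by case: (eqVneq k i.+1) => [->|ki1]; rewrite ?eqxx // (negbTE ki) (negbTE ki1).
Qed.

Lemma swapn_inj i : injective (swapn i).
Proof. exact: can_inj (swapnK i). Qed.

Lemma pimg_swapnK i : icomp (pimg (swapn i)) (pimg (swapn i)) =~ id_img.
Proof. by rewrite pimg_comp; apply: pimg_id => k; apply: swapnK. Qed.

(** * The image of [VP_n] *)

Lemma vb_invK : involutive vb_inv.
Proof.
have vb_ginvK : involutive vb_ginv by case=> //= i b; rewrite negbK.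
by move=> w; rewrite /vb_inv map_rev revK -map_comp (eq_map vb_ginvK) map_id.
Qed.

Lemma vb_inv_cat u v : vb_inv (u ++ v) = vb_inv v ++ vb_inv u.
Proof. by rewrite /vb_inv map_cat rev_cat. Qed.

Lemma vb_valid_inv n w : vb_valid n (vb_inv w) = vb_valid n w.
Proof. by rewrite /vb_valid /vb_inv all_rev all_map; apply: eq_all; case. Qed.

Lemma imgw_inv w : icomp (imgw (vb_inv w)) (imgw w) =~ id_img.
Proof.
elim: w => [|g w IH]; first exact: icomp1I.
rewrite -cat1s vb_inv_cat !imgw_cat imgw1 icompA -(icompA (imgw [:: _])).
by rewrite imgw1 gimg_inv icomp1I IH.
Qed.

Lemma permw_cat u v : permw (u ++ v) =1 permw u \o permw v.
Proof. by move=> k; elim: u => //= g u ->. Qed.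

Lemma permw_inv w : cancel (permw w) (permw (vb_inv w)).
Proof.
elim: w => //= g w IH k; rewrite -cat1s vb_inv_cat permw_cat /=.
have -> : vb_idx (vb_ginv g) = vb_idx g by case: g.
by rewrite swapnK IH.
Qed.

Definition Cb_letter n (e : nat * nat * bool) : bool :=
  [&& 0 < e.1.1 <= n, 0 < e.1.2 <= n & e.1.1 != e.1.2].

Lemma swapn_range n i k : 0 < i < n -> 0 < k <= n -> 0 < swapn i k <= n.
Proof. by rewrite /swapn; case: eqVneq => [->|_]; [lia|case: eqVneq => [->|_]; lia]. Qed.

Lemma Cb_letter_relabel n i e :
  0 < i < n -> Cb_letter n e -> Cb_letter n (relabel (swapn i) e).
Proof.
move=> hi /and3P[h1 h2 h3].
by rewrite /Cb_letter /relabel /= (inj_eq (@swapn_inj i)) h3 !swapn_range.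
Qed.

Lemma gimg_factor n g : 0 < vb_idx g < n ->
  exists2 u, all (Cb_letter n) u & gimg g =~ icomp (imge u) (pimg (swapn (vb_idx g))).
Proof.
case: g => [i [] | i] /= hi.
- exists [:: ((i.+1, i), false)]; first by rewrite /= /Cb_letter /=; lia.
  by rewrite imge1 -alpha_pimg sigma_factor.
- exists [:: ((i, i.+1), true)]; first by rewrite /= /Cb_letter /=; lia.
  by rewrite imge1 -alpha_pimg sigma_inv_factor.
- by exists [::]; rewrite // icomp1I alpha_pimg.
Qed.

(* Each generator maps to a product of [eps]'s times a permutation of the [x_k], and the
   permutation parts can be moved to the right by relabelling the [eps]'s. *)
Lemma imgw_factor n w : vb_valid n w ->
  exists2 u, all (Cb_letter n) u & imgw w =~ icomp (imge u) (pimg (permw w)).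
Proof.
elim: w => [_|g w IH /andP[hg /IH[u hu Hu]]]; first by exists [::].
have [ug hug Hug] := gimg_factor hg.
exists (ug ++ map (relabel (swapn (vb_idx g))) u).
  rewrite all_cat hug all_map; apply/allP => e he /=.
  by apply: Cb_letter_relabel => //; move/allP: hu; apply.
rewrite /imgw /= -/(imgw w) Hug Hu imge_cat icompA -(icompA (pimg _)).
by rewrite (pimg_imge (@swapn_inj _)) icompA pimg_comp -icompA.
Qed.

(* Makes a nonempty letter list out of any list, as [phiw_epsw] requires. *)
Lemma imge_pad e u : e.1.1 != e.1.2 -> imge (e :: flipe e :: u) =~ imge u.
Proof. exact: (imge_cancel [::] u). Qed.

Lemma phi_VP_sub_Cb n f : phi_img n (VPword n) f -> Cb_set n f.
Proof.
move=> [w [[hv hp] Hf]].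
have [u hu Hu] := imgw_factor hv.
have {hp}Hu : imgw w =~ imge u by rewrite Hu (pimg_id hp) icompI1.
case: w hv Hf Hu => [|g w] hv Hf Hu; first by exists [::].
have n2 : 1 < n by case/andP: hv; case: (g) => [i ?|i] /=; lia.
pose e := ((2, 1), true).
exists [:: e, flipe e & u]; split; first by rewrite /= hu /Cb_letter /=; lia.
by move=> v /Hf ->; apply: phiw_epsw; rewrite // imge_pad.
Qed.

Definition swaps (l : seq nat) (k : nat) : nat := foldl (fun k x => swapn x k) k l.

Lemma conj_rhos_cons x l m : map Rho (rev (x :: l)) ++ m ++ map Rho (x :: l) =
  map Rho (rev l) ++ (Rho x :: m ++ [:: Rho x]) ++ map Rho l.
Proof. by rewrite rev_cons map_rcons -cats1 -!catA /= -catA. Qed.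

Lemma imgw_conj_rhos l m c d t : imgw m =~ eimg ((c, d), t) ->
  imgw (map Rho (rev l) ++ m ++ map Rho l) =~ eimg ((swaps l c, swaps l d), t).
Proof.
elim: l m c d => [|x l IH] m c d H; first by rewrite /= cats0.
rewrite conj_rhos_cons.
apply: IH; rewrite -cat1s !imgw_cat !imgw1 H /= alpha_pimg.
by rewrite -icompA (pimg_eimg (@swapn_inj x)) icompA pimg_swapnK icompI1.
Qed.

Lemma permw_conj_rhos l m : permw m =1 id ->
  permw (map Rho (rev l) ++ m ++ map Rho l) =1 id.
Proof.
elim: l m => [|x l IH] m H k; first by rewrite /= cats0 H.
rewrite conj_rhos_cons.
by apply: IH => k'; rewrite /= permw_cat /= H swapnK.
Qed.

Lemma swaps_iota s m : swaps (iota s m) s = s + m.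
Proof.
by elim: m s => [|m IH] s; rewrite ?addn0 // /swaps /= /swapn eqxx -/(swaps _ _) IH addSnnS.
Qed.

Lemma swaps_iota_lt s m k : k < s -> swaps (iota s m) k = k.
Proof.
elim: m s => [|m IH] s ks //=.
by rewrite /swaps /= /swapn !ltn_eqF -/(swaps _ _) ?IH //; lia.
Qed.

Lemma imgw_lamw a b : a != b -> imgw (lamw a b) =~ eimg ((b, a), true).
Proof.
rewrite /lamw; case: ltngtP => // [lt|gt] _.
- rewrite (imgw_conj_rhos _ (imgw_rho_sigma_inv a)) swaps_iota swaps_iota_lt //.
  by have -> : a.+1 + (b - a - 1) = b by lia.
- rewrite (imgw_conj_rhos _ (imgw_sigma_inv_rho b)) swaps_iota swaps_iota_lt //.
  by have -> : b.+1 + (a - b - 1) = a by lia.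
Qed.

Lemma permw_lamw a b : permw (lamw a b) =1 id.
Proof.
by rewrite /lamw; case: ltngtP => _ //; apply: permw_conj_rhos => k /=; rewrite swapnK.
Qed.

Lemma vb_valid_lamw n a b : 0 < a <= n -> 0 < b <= n -> vb_valid n (lamw a b).
Proof.
move=> ha hb; rewrite /lamw /vb_valid; case: ltngtP => h //;
  rewrite !all_cat !all_map all_rev /=; apply/and3P;
  split; try (apply/allP => x; rewrite mem_iota /=); lia.
Qed.

Lemma lamw_nonnil a b : a != b -> ~~ nilp (lamw a b).
Proof. by rewrite /lamw; case: ltngtP => // _ _; rewrite /nilp !size_cat addnC. Qed.

Definition eps_word (e : nat * nat * bool) : seq vbgen :=
  if e.2 then lamw e.1.2 e.1.1 else vb_inv (lamw e.1.2 e.1.1).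

Definition eps_words (u : seq (nat * nat * bool)) : seq vbgen := flatten (map eps_word u).

Lemma imgw_eps_word e : e.1.1 != e.1.2 -> imgw (eps_word e) =~ eimg e.
Proof.
case: e => [[x y] t] /= xy; have yx : y != x by rewrite eq_sym.
rewrite /eps_word /=; case: t; first exact: imgw_lamw.
rewrite -[imgw _]icompI1 -(eimg_flipK (e := ((x, y), true)) xy) -icompA.
by rewrite -(imgw_lamw yx) imgw_inv icomp1I.
Qed.

Lemma imgw_eps_words u : all (fun e => e.1.1 != e.1.2) u -> imgw (eps_words u) =~ imge u.
Proof. by elim: u => [|e u IH] //= /andP[he /IH]; rewrite imgw_cat imgw_eps_word // => ->. Qed.

Lemma eps_word_nonnil e : e.1.1 != e.1.2 -> ~~ nilp (eps_word e).
Proof.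
case: e => [[x y] t] /= xy; rewrite /eps_word /nilp /=.
by case: t; rewrite ?size_rev ?size_map; apply: lamw_nonnil; rewrite eq_sym.
Qed.

Lemma nilp_eps_words u :
  all (fun e => e.1.1 != e.1.2) u -> nilp (eps_words u) = nilp u.
Proof.
case: u => [|e u] //= /andP[/eps_word_nonnil he _].
by rewrite /eps_words /= /nilp size_cat; move: he; rewrite /nilp; case: (size _).
Qed.

Lemma VPword_cat n u v : VPword n u -> VPword n v -> VPword n (u ++ v).
Proof.
move=> [hu pu] [hv pv]; split; first by rewrite /vb_valid all_cat; apply/andP.
by move=> k; rewrite permw_cat /= pv pu.
Qed.

Lemma VPword_eps_words n u : all (Cb_letter n) u -> VPword n (eps_words u).
Proof.
elim: u => [_|[[x y] t] u IH /andP[/and3P[hx hy xy] /IH hu]]; first by [].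
apply: VPword_cat hu; rewrite /eps_word /=.
have [hv hp] : VPword n (lamw y x) by split; [exact: vb_valid_lamw | exact: permw_lamw].
case: t {hx hy xy}; split; rewrite ?vb_valid_inv //.
by move=> k; rewrite -{1}(hp k) permw_inv.
Qed.

Lemma Cb_sub_phi_VP n f : Cb_set n f -> phi_img n (VPword n) f.
Proof.
move=> [u [hu Hf]].
have hneq : all (fun e => e.1.1 != e.1.2) u by apply: sub_all hu => e /and3P[].
exists (eps_words u); split; first exact: VPword_eps_words.
by move=> v /Hf ->; symmetry; apply: phiw_epsw; rewrite ?nilp_eps_words ?imgw_eps_words.
Qed.

(** * The image of [V_i^*] *)

Definition D_letter i (e : nat * nat * bool) : bool :=
  ((e.1.1 == i.+1) && (0 < e.1.2 <= i)) || ((e.1.2 == i.+1) && (0 < e.1.1 <= i)).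

Definition inD i (I : img) : Prop := exists2 u, all (D_letter i) u & I =~ imge u.

Lemma D_letter_neq i e : D_letter i e -> e.1.1 != e.1.2.
Proof. by rewrite /D_letter; lia. Qed.

Lemma inD_img_eq i I J : I =~ J -> inD i J -> inD i I.
Proof. by move=> H [u hu Hu]; exists u; rewrite // H. Qed.

#[export] Instance inD_Proper i : Proper (img_eq ==> iff) (inD i).
Proof. by move=> I J H; split; apply: inD_img_eq. Qed.

Lemma inD_id i : inD i id_img.
Proof. by exists [::]. Qed.

Lemma inD_comp i I J : inD i I -> inD i J -> inD i (icomp I J).
Proof.
move=> [u hu Hu] [v hv Hv]; exists (u ++ v); first by rewrite all_cat hu hv.
by rewrite imge_cat Hu Hv.
Qed.

Definition einv (u : seq (nat * nat * bool)) := rev (map flipe u).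

Lemma imge_einv u :
  all (fun e => e.1.1 != e.1.2) u -> icomp (imge u) (imge (einv u)) =~ id_img.
Proof.
elim: u => [_|e u IH] /=; first exact: icomp1I.
move=> /andP[he /IH hu].
have -> : einv (e :: u) = einv u ++ [:: flipe e] by rewrite /einv /= rev_cons cats1.
rewrite -cat1s !imge_cat !imge1 icompA -(icompA (imge u)) hu icomp1I.
exact: eimg_flipK.
Qed.

Lemma inD_inv i I J : inD i I -> icomp J I =~ id_img -> inD i J.
Proof.
move=> [u hu Hu] HJ; exists (einv u); first by rewrite all_rev all_map.
have hneq : all (fun e => e.1.1 != e.1.2) u by apply: sub_all hu => e /D_letter_neq.
by rewrite -[J]icompI1 -(imge_einv hneq) -icompA -Hu HJ icomp1I.
Qed.

Lemma inD_gen i S w :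
  (forall w, S w -> inD i (imgw w)) -> gen S w -> inD i (imgw w).
Proof.
move=> HS; elim => [|u /HS //|u v _ Hu _ Hv|u _ Hu]; first exact: inD_id.
- by apply: inD_img_eq (imgw_cat u v) _; apply: inD_comp.
- exact: inD_inv Hu (imgw_inv u).
Qed.

Lemma D_letter_flipe i e : D_letter i (flipe e) = D_letter i e.
Proof. by []. Qed.

Lemma imge_conj_commute e d : e.1.1 != e.1.2 ->
  imge [:: e; d] =~ imge [:: d; e] -> imge [:: e; d; flipe e] =~ imge [:: d].
Proof.
move=> he H.
rewrite -[[:: e; d; flipe e]]/([::] ++ [:: e; d] ++ [:: flipe e]) imge_congr //.
by rewrite -[[::] ++ _]/([:: d] ++ [:: e; flipe e] ++ [::]) imge_cancel // cats0.
Qed.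

(* If [e] is not itself a letter of [D_i], both its indices are at most [i]; each case is then
   one of the [conj_eps_*] relations or a commutation. *)
Lemma inD_conj_letter i e d :
  Cb_letter i.+1 e -> D_letter i d -> inD i (imge [:: e; d; flipe e]).
Proof.
move=> he hd; have [hde|hde] := boolP (D_letter i e).
  by exists [:: e; d; flipe e] => //=; rewrite D_letter_flipe hde hd.
case: e he hde => [[p q] t] /and3P[/= hp hq pq] hde.
have {hde hp hq} [hp hq] : 0 < p <= i /\ 0 < q <= i by move: hde; rewrite /D_letter /=; lia.
have commute d' : D_letter i d' ->
    imge [:: ((p, q), t); d'] =~ imge [:: d'; ((p, q), t)] ->
    inD i (imge [:: ((p, q), t); d'; ((p, q), ~~ t)]).
  by move=> hd' H; exists [:: d']; rewrite /= ?hd' //; apply: imge_conj_commute.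
case: d hd => [[x y] s]; rewrite /D_letter /= => /orP[] /andP[/eqP-> hy].
- case: (eqVneq y p) => [->|yp].
    exists [:: ((i.+1, q), ~~ t); ((i.+1, p), s); ((i.+1, q), t)].
      by rewrite /= /D_letter /=; lia.
    by apply: conj_eps_cp; lia.
  by apply: commute; [rewrite /D_letter /=; lia | apply: eps_commute; lia].
- case: (eqVneq x p) => [->|xp].
    exists [:: ((i.+1, q), ~~ t); ((p, i.+1), s); ((i.+1, q), t)].
      by rewrite /= /D_letter /=; lia.
    by apply: conj_eps_pc; lia.
  case: (eqVneq x q) => [->|xq].
    exists [:: ((i.+1, q), ~~ t); ((p, i.+1), ~~ s); ((i.+1, q), t); ((p, i.+1), s);
               ((q, i.+1), s)].
      by rewrite /= /D_letter /=; lia.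
    by apply: conj_eps_qc; lia.
  by apply: commute; [rewrite /D_letter /=; lia | apply: eps_commute; lia].
Qed.

Definition preserves_D i (G H : img) : Prop :=
  forall I, inD i I -> inD i (icomp (icomp G I) H).

Lemma preserves_D_img_eq i G G' H H' :
  G =~ G' -> H =~ H' -> preserves_D i G H -> preserves_D i G' H'.
Proof. by move=> hG hH C I /C; apply: inD_img_eq; rewrite hG hH. Qed.

Lemma preserves_D_comp i G H G' H' :
  preserves_D i G H -> preserves_D i G' H' -> preserves_D i (icomp G G') (icomp H' H).
Proof.
by move=> PG PG' I /PG' /PG; apply: inD_img_eq; rewrite !icompA.
Qed.

Lemma preserves_D_letter i e : Cb_letter i.+1 e -> preserves_D i (eimg e) (eimg (flipe e)).
Proof.
move=> he I [u hu HI]; have hne : e.1.1 != e.1.2 by case/and3P: he.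
have -> : icomp (icomp (eimg e) I) (eimg (flipe e)) =~ imge (e :: u ++ [:: flipe e]).
  by rewrite HI -cat1s !imge_cat !imge1 icompA.
elim: u hu {HI} => [_|d u IH /andP[hd /IH hu]].
  by exists [::]; last exact: imge_pad.
rewrite -[e :: _]/([:: e; d] ++ u ++ [:: flipe e]).
rewrite -(imge_cancel [:: e; d] (u ++ [:: flipe e]) (e := flipe e) hne) flipeK.
rewrite -[_ ++ _]/([:: e; d; flipe e] ++ (e :: u ++ [:: flipe e])) imge_cat.
exact/inD_comp/hu/inD_conj_letter.
Qed.

Lemma preserves_D_gen i g : gen (Lam_set i) g ->
  preserves_D i (imgw g) (imgw (vb_inv g)) /\ preserves_D i (imgw (vb_inv g)) (imgw g).
Proof.
elim=> [|_ [k [l [hk hl kl ->]]]|u v _ [Hu Hu'] _ [Hv Hv']|u _ [Hu Hu']].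
- by split=> I; rewrite /= icompI1 icomp1I.
- have lk : l != k by rewrite eq_sym.
  have he t : Cb_letter i.+1 ((l, k), t) by rewrite /Cb_letter /= hk hl lk.
  have h1 : imgw (lamw k l) =~ eimg ((l, k), true) by apply: imgw_lamw.
  have h2 : imgw (vb_inv (lamw k l)) =~ eimg ((l, k), false).
    exact: (@imgw_eps_word ((l, k), false) lk).
  by split; apply: preserves_D_img_eq (preserves_D_letter (he _)); rewrite ?h1 ?h2.
- rewrite vb_inv_cat; split.
    by apply: preserves_D_img_eq (preserves_D_comp Hu Hv); rewrite imgw_cat.
  by apply: preserves_D_img_eq (preserves_D_comp Hv' Hu'); rewrite imgw_cat.
- by rewrite vb_invK.
Qed.

Lemma Vstar_inD i w : Vstar i w -> inD i (imgw w).
Proof.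
apply: inD_gen => _ [g [h [hg hh ->]]].
rewrite !imgw_cat -icompA; apply: (preserves_D_gen hg).1.
apply: inD_gen hh => _ [k [hk [->|->]]].
- exists [:: ((i.+1, k), true)]; first by rewrite /= /D_letter /= eqxx hk.
  by rewrite imge1 imgw_lamw //; lia.
- exists [:: ((k, i.+1), true)]; first by rewrite /= /D_letter /= eqxx hk orbT.
  by rewrite imge1 imgw_lamw //; lia.
Qed.

Lemma phi_Vstar_sub_D n i f : 0 < i < n -> phi_img n (Vstar i) f -> D_set n i f.
Proof.
move=> hi [w [/Vstar_inD [u hu Hu] Hf]].
case: w Hf Hu => [|g w] Hf Hu; first by exists [::].
pose e := ((i.+1, 1), true); have he : e.1.1 != e.1.2 by rewrite /=; lia.
exists [:: e, flipe e & u]; split; first by rewrite /= hu /D_letter /=; lia.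
by move=> v /Hf ->; apply: phiw_epsw; rewrite // imge_pad.
Qed.

Lemma gen_V_eps_word i e : D_letter i e -> gen (V_set i) (eps_word e).
Proof.
case: e => [[x y] t]; rewrite /D_letter /eps_word /= => /orP[] /andP[/eqP-> hy].
- have hg : gen (V_set i) (lamw y i.+1) by apply: gen_in; exists y; split => //; left.
  by case: t => //; apply: gen_inv.
- have hg : gen (V_set i) (lamw i.+1 x) by apply: gen_in; exists x; split => //; right.
  by case: t => //; apply: gen_inv.
Qed.

Lemma gen_V_eps_words i u : all (D_letter i) u -> gen (V_set i) (eps_words u).
Proof.
elim: u => [_|e u IH /andP[he hu]]; first exact: gen_nil.
exact/gen_cat/IH/hu/gen_V_eps_word.
Qed.

Lemma D_sub_phi_Vstar n i f : D_set n i f -> phi_img n (Vstar i) f.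
Proof.
move=> [u [hu Hf]].
have hneq : all (fun e => e.1.1 != e.1.2) u by apply: sub_all hu => e /D_letter_neq.
exists (eps_words u); split.
  apply: gen_in; exists [::], (eps_words u); split; rewrite ?cats0 //; first exact: gen_nil.
  exact: gen_V_eps_words.
by move=> v /Hf ->; symmetry; apply: phiw_epsw; rewrite ?nilp_eps_words ?imgw_eps_words.
Qed.

Theorem corollary3 (n : nat) :
  (forall f : aut, phi_img n (VPword n) f <-> Cb_set n f) /\
  (forall i : nat, 0 < i < n ->
     forall f : aut, phi_img n (Vstar i) f <-> D_set n i f).
Proof.
split=> [f | i hi f]; split.
- exact: phi_VP_sub_Cb.
- exact: Cb_sub_phi_VP.
- exact: phi_Vstar_sub_D.
- exact: D_sub_phi_Vstar.
Qed.
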